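(* Let $G$ be a finite group, $N$ a normal subgroup, and $\mathcal O$ an $N_\infty$ operad for $G$. Then (i) the levelwise fixed points $\mathcal O^N$ (with $(\mathcal O^N)_n=\mathcal O_n^{N\times\{1\}}$) form an $N_\infty$ $G/N$-operad, and (ii) for $N\le H\le G$, a finite $H/N$-set is admissible for $\mathcal O^N$ if and only if it is admissible for $\mathcal O$ when regarded as an $H$-set via $H\to H/N$.
   Context: For a group $\Pi$, a $\Pi$-operad consists of $\Pi\times\Sigma_n$-spaces $\mathcal O_n$, a $\Pi$-fixed identity in $\mathcal O_1$ and $\Pi$-equivariant composition maps satisfying the usual operad axioms. A universal space for a family $\mathcal F$ of subgroups (closed under subgroups and conjugation) is a space whose $\Gamma$-fixed points are contractible for $\Gamma\in\mathcal F$ and empty otherwise. An $N_\infty$ $\Pi$-operad is a $\Pi$-operad with $\mathcal O_0$ $\Pi$-contractible, $\Sigma_n$ acting freely on $\mathcal O_n$, and $\mathcal O_n$ a universal space for a family of subgroups of $\Pi\times\Sigma_n$ containing all $L\times\{1\}$. For $L\le\Pi$ and a finite $L$-set $T$, $|T|=n$, let $\Gamma_T\le\Pi\times\Sigma_n$ be the graph of a homomorphism $L\to\Sigma_n$ encoding $T$; $T$ is admissible for $\mathcal O$ if $\mathcal O_n^{\Gamma_T}\neq\emptyset$. *)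

From HB Require Import structures.
From mathcomp Require Import all_boot all_order all_algebra all_fingroup.
From mathcomp Require Import all_classical reals topology.
From mathcomp Require Import Rstruct Rstruct_topology.

Unset Strict Implicit.
Unset Printing Implicit Defensive.

Local Open Scope classical_set_scope.

Definition Rl := Rdefinitions.R.
Definition unit_itv : set Rl := [set t : Rl | (0 <= t <= 1)%R].

Definition contractible_set (X : topologicalType) (A : set X) : Prop :=
  exists2 a : X, A a &
  exists H : X -> Rl -> X,
    [/\ {within A `*` unit_itv, continuous (fun p : X * Rl => H p.1 p.2)},
        (forall x t, A x -> unit_itv t -> A (H x t)),
        (forall x, A x -> H x 0%R = x) &
        (forall x, A x -> H x 1%R = a)].

(** Raw data of a Pi-operad, Pi = the finite group [pT]:
    spaces O_n, a left Pi-action and a left Sigma_n-action on O_n,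
    an identity in O_1 and composition maps
    gamma : O_k x O_{j_1} x ... x O_{j_k} -> O_{j_1 + ... + j_k}. *)
Record preOperad (pT : finGroupType) := PreOperad {
  sp : nat -> topologicalType;
  actP : forall n, pT -> sp n -> sp n;
  actS : forall n, 'S_n -> sp n -> sp n;
  opunit : sp 1;
  opcomp : forall k (js : 'I_k -> nat),
      sp k -> (forall i : 'I_k, sp (js i)) -> sp (\sum_(i < k) js i)
}.
Arguments sp {pT} O n : rename.
Arguments actP {pT} O n g x : rename.
Arguments actS {pT} O n s x : rename.
Arguments opunit {pT} O : rename.
Arguments opcomp {pT} O {k} js c d : rename.

Section Operads.
Variable pT : finGroupType.
Implicit Type O : preOperad pT.

Definition tr O m n (E : m = n) (x : sp O m) : sp O n :=
  eq_rect m (fun n => sp O n) x n E.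
Arguments tr {O m n} E x.

(** block index: input t of the i-th block *)
Definition Rank k (js : 'I_k -> nat) (i : 'I_k) (t : 'I_(js i)) :
  'I_(\sum_(i < k) js i) := @tagnat.Rank k js i t.
Arguments Rank {k js i} t.

Definition fixset O n (Gam : {set (pT * 'S_n)}) : set (sp O n) :=
  fun x => forall p, p \in Gam -> actP O n p.1 (actS O n p.2 x) = x.

Definition op_actions O : Prop :=
   (forall n x, actP O n 1%g x = x) /\
   (forall n g h x, actP O n (g * h)%g x = actP O n g (actP O n h x)) /\
   (forall n g, continuous (actP O n g)) /\
   (forall n x, actS O n 1%g x = x) /\
   (forall n s t x, actS O n (s * t)%g x = actS O n s (actS O n t x)) /\
   (forall n s, continuous (actS O n s)) /\
   (forall n g s x, actP O n g (actS O n s x) = actS O n s (actP O n g x)).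

Definition op_unit_fixed O : Prop :=
  forall g, actP O 1 g (opunit O) = opunit O.

Definition op_comp O : Prop :=
   (forall k (js : 'I_k -> nat),
      continuous (fun p : sp O k * prod_topology (fun i : 'I_k => sp O (js i)) =>
                    opcomp O js p.1 p.2)) /\
   (forall k (js : 'I_k -> nat) g c (d : forall i, sp O (js i)),
      opcomp O js (actP O k g c) (fun i => actP O (js i) g (d i))
      = actP O _ g (opcomp O js c d)).

Definition op_assoc O : Prop :=
   forall k (js : 'I_k -> nat) (ls : 'I_(\sum_(i < k) js i) -> nat)
      (c : sp O k) (d : forall i, sp O (js i)) (e : forall m, sp O (ls m))
      (E : \sum_(m < \sum_(i < k) js i) ls m
           = \sum_(i < k) \sum_(t < js i) ls (Rank t)),
      tr E (opcomp O ls (opcomp O js c d) e)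
      = opcomp O (fun i => \sum_(t < js i) ls (Rank t)) c
          (fun i => opcomp O (fun t => ls (Rank t)) (d i)
                      (fun t => e (Rank t))).

Definition op_unital O : Prop :=
   (forall j (x : sp O j) (E : \sum_(i < 1) j = j),
      tr E (opcomp O (fun _ : 'I_1 => j) (opunit O) (fun _ => x)) = x) /\
   (forall k (c : sp O k) (E : \sum_(i < k) 1 = k),
      tr E (opcomp O (fun _ : 'I_k => 1) c (fun _ => opunit O)) = c).

(* Sigma-equivariance (for left actions): block permutations, block sums *)
Definition op_sym_equivariant O : Prop :=
   (forall k (js : 'I_k -> nat) (s : 'S_k) (c : sp O k)
      (d : forall i, sp O (js i))
      (E : \sum_(i < k) js (s i) = \sum_(i < k) js i)
      (b : 'S_(\sum_(i < k) js i)),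
      (forall i (t : 'I_(js (s i))),
          b (cast_ord E (@Rank k (fun i => js (s i)) i t)) = Rank t) ->
      opcomp O js (actS O k s c) d
      = actS O _ b (tr E (opcomp O (fun i => js (s i)) c (fun i => d (s i))))) /\
   (forall k (js : 'I_k -> nat) (c : sp O k) (d : forall i, sp O (js i))
      (ts : forall i, 'S_(js i)) (b : 'S_(\sum_(i < k) js i)),
      (forall i (t : 'I_(js i)), b (Rank t) = Rank (ts i t)) ->
      opcomp O js c (fun i => actS O (js i) (ts i) (d i))
      = actS O _ b (opcomp O js c d)).

Definition isOperad O : Prop :=
  [/\ op_actions O, op_unit_fixed O, op_comp O, op_assoc O &
      op_unital O /\ op_sym_equivariant O].

Definition Pi_contractible O : Prop :=
  exists2 x0 : sp O 0, (forall g, actP O 0 g x0 = x0) &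
  exists H : sp O 0 -> Rl -> sp O 0,
    [/\ {within setT `*` unit_itv, continuous (fun p : sp O 0 * Rl => H p.1 p.2)},
        (forall x, H x 0%R = x), (forall x, H x 1%R = x0) &
        (forall g x t, H (actP O 0 g x) t = actP O 0 g (H x t))].

Definition is_family (hT : finGroupType) (F : {set {set hT}}) : Prop :=
  [/\ (forall Gam, Gam \in F -> group_set Gam),
      (forall Gam Gam', Gam \in F -> group_set Gam' -> Gam' \subset Gam ->
                        Gam' \in F) &
      (forall Gam y, Gam \in F -> (Gam :^ y)%g \in F)].

Definition universal_n O n : Prop :=
  exists F : {set {set (pT * 'S_n)}},
  [/\ is_family _ F,
      (forall Gam : {group (pT * 'S_n)}, (Gam : {set _}) \in F ->
                        contractible_set _ (fixset O n Gam)),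
      (forall Gam : {group (pT * 'S_n)}, (Gam : {set _}) \notin F ->
                        fixset O n Gam = set0) &
      (forall L : {group pT}, finset.setX L [set 1%g]%SET \in F)].

Definition isNinf O : Prop :=
  [/\ isOperad O, Pi_contractible O,
      (forall n s x, actS O n s x = x -> s = 1%g) &
      (forall n, universal_n O n)].

(** A finite L-set T of cardinality n, encoded by f : L -> Sigma_n; it is
    admissible if the graph Gamma_T has a fixed point in O_n. *)
Definition admissible O n (L : {set pT}) (f : pT -> 'S_n) : Prop :=
  exists x, fixset O n [set (l, f l) | l in L]%SET x.

End Operads.
Arguments fixset {pT} O n Gam.
Arguments isOperad {pT} O.
Arguments isNinf {pT} O.
Arguments admissible {pT} O n L f.

Definition FixSp (gT : finGroupType) (O : preOperad gT) (N : {set gT})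
  (n : nat) : topologicalType :=
  set_type (fixset O n (finset.setX N [set 1%g]%SET)).
Arguments FixSp {gT} O N n.

From Pilot Require Import Defs.
From HB Require Import structures.
From mathcomp Require Import all_boot all_order all_algebra all_fingroup.
From mathcomp Require Import all_classical reals topology.
From mathcomp Require Import Rstruct Rstruct_topology.

(* (O^N)_n is the subspace of N-fixed points of O_n.  Since N is normal, it is
   stable under G, on which G acts through G/N, and under the symmetric actions
   and the composition maps; hence every operad axiom restricts from O.  For a
   subgroup Gamma of G/N x S_n, the Gamma-fixed points of (O^N)_n are the
   fixed points in O_n of its preimage in G x S_n, a subgroup containing N x 1.
   So (O^N)_n is universal for the family of those Gamma whose preimage lies in
   the family of O_n, and since the graph of an H/N-set pulls back to the graph
   of the inflated H-set, admissibility is preserved in both directions. *)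

Lemma set_val_inj (T : Type) (A : set T) : injective (@set_val T A).
Proof. exact: val_inj. Qed.

Lemma continuous_pair_map (X Y X' Y' : topologicalType) (f : X -> X') (g : Y -> Y') :
  continuous f -> continuous g -> continuous (fun p : X * Y => (f p.1, g p.2)).
Proof.
move=> cf cg p; apply: cvg_pair.
  by apply: continuous_comp; [exact: cvg_fst | exact: cf].
by apply: continuous_comp; [exact: cvg_snd | exact: cg].
Qed.

Lemma continuous_prod_map (I : eqType) (T U : I -> topologicalType)
    (h : forall i, T i -> U i) :
  (forall i, continuous (h i)) ->
  continuous (fun f : prod_topology T => (fun i => h i (f i)) : prod_topology U).
Proof.
move=> ch f; apply: (iffRL (cvg_sup _ _ _)) => [|i].
  by apply: fmap_filter; exact: nbhs_filter.
apply: (@continuous_comp_initial _ (prod_topology T) _ (fun g => g i)) => {}f.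
by apply: continuous_comp; [exact: proj_continuous | exact: ch].
Qed.

Section SubspaceHomotopy.
Local Open Scope classical_set_scope.
Context {X : topologicalType} (B : set X).

(* Junk value [x] wherever [H] leaves [B]; it is only used where [H] stays in [B]. *)
Definition restrict_homotopy (H : X -> Rl -> X) (x : set_type B) (t : Rl) :
    set_type B :=
  if pselect (B (H (set_val x) t)) is left Bx then exist (fun z => z \in B) _ (mem_set Bx)
  else x.

Lemma restrict_homotopyE H x t :
  B (H (set_val x) t) -> set_val (restrict_homotopy H x t) = H (set_val x) t.
Proof. by rewrite /restrict_homotopy; case: pselect. Qed.

Lemma restrict_homotopy_continuous {A : set X} {A' : set (set_type B)} {H} :
    (forall x, A' x -> A (set_val x)) ->
    (forall x t, A' x -> unit_itv t -> B (H (set_val x) t)) ->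
    {within A `*` unit_itv, continuous (fun p : X * Rl => H p.1 p.2)} ->
  {within A' `*` unit_itv,
    continuous (fun p : set_type B * Rl => restrict_homotopy H p.1 p.2)}.
Proof.
move=> A'A HB /subspace_sigL_continuousP cH.
apply/subspace_sigL_continuousP; apply: continuous_comp_initial.
have valAP (p : set_type (A' `*` unit_itv)) :
    (set_val (set_val p).1, (set_val p).2) \in A `*` unit_itv.
  by case: p => -[x t] /= /set_mem[A'x It]; apply: mem_set; split => //; exact: A'A.
pose val_pair p : set_type (A `*` unit_itv) :=
  exist (fun z => z \in A `*` unit_itv) _ (valAP p).
have -> : set_val \o sigL (A' `*` unit_itv)
              (fun p : set_type B * Rl => restrict_homotopy H p.1 p.2)
    = sigL (A `*` unit_itv) (fun p : X * Rl => H p.1 p.2) \o val_pair.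
  apply: funext => -[[x t] /= /set_mem[A'x It]].
  by rewrite /sigL /= restrict_homotopyE //; exact: HB.
move=> p; apply: continuous_comp; last exact: cH.
apply: (@continuous_comp_initial _ _ _ _ val_pair) => {}p.
have -> : set_val \o val_pair
    = (fun r : set_type B * Rl => (set_val r.1, r.2)) \o set_val by [].
apply: continuous_comp; first exact: initial_continuous.
by apply: (@continuous_pair_map _ _ _ _ set_val id); [exact: initial_continuous | move=> ?].
Qed.

Lemma contractible_set_type {A : set X} {A' : set (set_type B)} :
    (forall x : set_type B, A' x <-> A (set_val x)) -> A `<=` B ->
  contractible_set X A -> contractible_set (set_type B) A'.
Proof.
move=> A'E sAB [a Aa [H [cH HA H0 H1]]].
have A'A x : A' x -> A (set_val x) by move/A'E.
have HB x t : A' x -> unit_itv t -> B (H (set_val x) t).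
  by move=> /A'A Ax It; apply/sAB/HA.
exists (exist (fun z => z \in B) a (mem_set (sAB _ Aa))); first exact/A'E.
exists (restrict_homotopy H); split.
- exact: (restrict_homotopy_continuous A'A HB cH).
- move=> x t A'x It; apply/A'E.
  by rewrite restrict_homotopyE; [apply: HA => //; exact: A'A | exact: HB].
- move=> x /A'A Ax; apply: set_val_inj.
  by rewrite restrict_homotopyE H0 //; exact: sAB.
- move=> x /A'A Ax; apply: val_inj; rewrite /= -set_valE.
  by rewrite restrict_homotopyE H1 //; exact: sAB.
Qed.

End SubspaceHomotopy.
Arguments restrict_homotopyE {X B H x t}.
Arguments restrict_homotopy_continuous {X B A A' H}.
Arguments contractible_set_type {X B A A'}.

Section FixedPointOperad.
Variables (gT : finGroupType) (N : {group gT}) (O : preOperad gT).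
Hypothesis nsNG : (N <| [set: gT])%g.
Hypothesis actO : op_actions gT O.
Hypothesis unitO : op_unit_fixed gT O.
Hypothesis compO : op_comp gT O.

Local Notation fixN n := (Defs.fixset O n (finset.setX N [set 1%g]%SET)).

Lemma norm_N g : g \in 'N(N)%g.
Proof. by case/andP: nsNG => _ /fintype.subsetP; apply; rewrite inE. Qed.

Lemma actP1 n x : actP O n 1%g x = x. Proof. by case: actO. Qed.
Lemma actPM n g h x : actP O n (g * h)%g x = actP O n g (actP O n h x).
Proof. by case: actO => _ []. Qed.
Lemma actP_continuous n g : continuous (actP O n g).
Proof. by case: actO => _ [_ []]. Qed.
Lemma actS1 n x : actS O n 1%g x = x. Proof. by case: actO => _ [_ [_ []]]. Qed.
Lemma actSM n s t x : actS O n (s * t)%g x = actS O n s (actS O n t x).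
Proof. by case: actO => _ [_ [_ [_ []]]]. Qed.
Lemma actS_continuous n s : continuous (actS O n s).
Proof. by case: actO => _ [_ [_ [_ [_ []]]]]. Qed.
Lemma actPS n g s x : actP O n g (actS O n s x) = actS O n s (actP O n g x).
Proof. by case: actO => _ [_ [_ [_ [_ []]]]]. Qed.

Lemma opcompP k (js : 'I_k -> nat) g c (d : forall i, sp O (js i)) :
  opcomp O js (actP O k g c) (fun i => actP O (js i) g (d i))
  = actP O _ g (opcomp O js c d).
Proof. by case: compO => _; apply. Qed.

Lemma fixNP n x : fixN n x <-> {in N, forall m, actP O n m x = x}.
Proof.
split=> [fx m mN | fx [m s]].
  by have := fx (m, 1%g); rewrite finset.in_setX mN set11 /= actS1; exact.
by rewrite finset.in_setX inE => /andP[mN /eqP/= ->]; rewrite actS1 fx.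
Qed.

Lemma fixN_actP {n} g {x} : fixN n x -> fixN n (actP O n g x).
Proof.
move=> /fixNP fx; apply/fixNP => m mN.
by rewrite -actPM conjgC actPM fx // memJ_norm // norm_N.
Qed.

Lemma fixN_actS {n} s {x} : fixN n x -> fixN n (actS O n s x).
Proof. by move=> /fixNP fx; apply/fixNP => m mN; rewrite actPS fx. Qed.

Lemma fixN_opunit : fixN 1 (opunit O).
Proof. by apply/fixNP => m _; exact: unitO. Qed.

Lemma fixN_opcomp {k} {js : 'I_k -> nat} {c} {d : forall i, sp O (js i)} :
  fixN k c -> (forall i, fixN (js i) (d i)) -> fixN _ (opcomp O js c d).
Proof.
move=> /fixNP fc fd; apply/fixNP => m mN; rewrite -opcompP fc //.
congr opcomp; apply: functional_extensionality_dep => i.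
by move/fixNP: (fd i); apply.
Qed.

(* G/N acts through a chosen representative; by [fixActP_coset] the choice is
   immaterial on N-fixed points. *)
Definition fixActP n (c : coset_of N) (x : FixSp O N n) : FixSp O N n :=
  exist (fun z => z \in fixN n) _ (mem_set (fixN_actP (repr c) (set_mem (valP x)))).

Definition fixActS n (s : 'S_n) (x : FixSp O N n) : FixSp O N n :=
  exist (fun z => z \in fixN n) _ (mem_set (fixN_actS s (set_mem (valP x)))).

Definition fixUnit : FixSp O N 1 :=
  exist (fun z => z \in fixN 1) _ (mem_set fixN_opunit).

Definition fixComp k (js : 'I_k -> nat) (c : FixSp O N k)
    (d : forall i : 'I_k, FixSp O N (js i)) : FixSp O N (\sum_(i < k) js i) :=
  exist (fun z => z \in fixN _) _
    (mem_set (fixN_opcomp (set_mem (valP c)) (fun i => set_mem (valP (d i))))).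

Definition fixOperad :=
  @PreOperad (coset_of N) (FixSp O N) fixActP fixActS fixUnit fixComp.

Lemma fixActP_val n c x : set_val (fixActP n c x) = actP O n (repr c) (set_val x).
Proof. by []. Qed.

Lemma fixActP_coset n g x :
  set_val (fixActP n (coset N g) x) = actP O n g (set_val x).
Proof.
rewrite fixActP_val.
have [m mN ->] := kercoset_rcoset (norm_N (repr (coset N g))) (norm_N g) (coset_reprK _).
by rewrite actPM; move/fixNP: (fixN_actP g (set_mem (valP x))); apply.
Qed.

Lemma fixActS_val n s x : set_val (fixActS n s x) = actS O n s (set_val x).
Proof. by []. Qed.

Lemma fixComp_val k js c d :
  set_val (@fixComp k js c d) = opcomp O js (set_val c) (fun i => set_val (d i)).
Proof. by []. Qed.

Lemma fixOperad_tr_val m n (E : m = n) (x : FixSp O N m) :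
  set_val (tr _ fixOperad m n E x) = tr _ O m n E (set_val x).
Proof. by case: n / E. Qed.

Lemma fixOperad_actions : op_actions _ fixOperad.
Proof.
split; [|split; [|split; [|split; [|split; [|split]]]]].
- by move=> n x; apply: set_val_inj; rewrite -(morph1 (coset_morphism N)) fixActP_coset actP1.
- move=> n c c' x; apply: set_val_inj.
  rewrite -[c]coset_reprK -[c']coset_reprK -coset_morphM ?norm_N //.
  by rewrite /= !fixActP_coset actPM.
- move=> n c; apply: continuous_comp_initial => x.
  have -> : set_val \o fixActP n c = actP O n (repr c) \o set_val by [].
  apply: continuous_comp; [exact: initial_continuous | exact: actP_continuous].
- by move=> n x; apply: set_val_inj; rewrite /= fixActS_val actS1.
- by move=> n s t x; apply: set_val_inj; rewrite /= !fixActS_val actSM.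
- move=> n s; apply: continuous_comp_initial => x.
  have -> : set_val \o fixActS n s = actS O n s \o set_val by [].
  apply: continuous_comp; [exact: initial_continuous | exact: actS_continuous].
- move=> n c s x; apply: set_val_inj.
  by rewrite /= fixActP_val !fixActS_val fixActP_val actPS.
Qed.

Lemma fixOperad_unit_fixed : op_unit_fixed _ fixOperad.
Proof. by move=> c; apply: set_val_inj; exact: unitO. Qed.

Lemma fixOperad_comp : op_comp _ fixOperad.
Proof.
split=> [k js | k js c x d]; last first.
  by apply: set_val_inj; rewrite /= fixComp_val opcompP.
apply: continuous_comp_initial => p.
pose val_args (f : prod_topology (fun i : 'I_k => FixSp O N (js i))) :
  prod_topology (fun i : 'I_k => sp O (js i)) := fun i => set_val (f i).
have -> : set_val \o (fun p => opcomp fixOperad js p.1 p.2)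
    = (fun q : sp O k * prod_topology (fun i : 'I_k => sp O (js i)) =>
         opcomp O js q.1 q.2) \o (fun p => (set_val p.1, val_args p.2)) by [].
apply: continuous_comp; last by case: compO => + _; apply.
apply: (@continuous_pair_map _ _ _ _ set_val val_args).
  exact: initial_continuous.
by apply: (@continuous_prod_map _ _ _ (fun i => set_val)) => i; exact: initial_continuous.
Qed.

Lemma fixOperad_assoc : op_assoc _ O -> op_assoc _ fixOperad.
Proof.
by move=> assocO k js ls c d e E; apply: set_val_inj; rewrite fixOperad_tr_val; exact: assocO.
Qed.

Lemma fixOperad_unital : op_unital _ O -> op_unital _ fixOperad.
Proof.
by case=> unitlO unitrO; split=> [j x | k c] E; apply: set_val_inj;
  rewrite fixOperad_tr_val; [exact: unitlO | exact: unitrO].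
Qed.

Lemma fixOperad_sym_equivariant :
  op_sym_equivariant _ O -> op_sym_equivariant _ fixOperad.
Proof.
case=> blockO sumO; split=> [k js s c d E b bE | k js c d ts b bE];
  apply: set_val_inj; rewrite [RHS]fixActS_val.
  by rewrite fixOperad_tr_val; exact: blockO.
exact: sumO.
Qed.

Lemma fixOperad_Pi_contractible : Pi_contractible _ O -> Pi_contractible _ fixOperad.
Proof.
move=> [x0 fix_x0 [H [cH H0 H1 HP]]].
have fixN_x0 : fixN 0 x0 by apply/fixNP => m _; exact: fix_x0.
have fixN_H (x : FixSp O N 0) t : fixN 0 (H (set_val x) t).
  apply/fixNP => m mN; rewrite -HP; congr H.
  by move/fixNP: (set_mem (valP x)); apply.
exists (exist (fun z => z \in fixN 0) x0 (mem_set fixN_x0)).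
  by move=> c; apply: set_val_inj; exact: fix_x0.
exists (restrict_homotopy (fixN 0) H); split.
- exact: (restrict_homotopy_continuous (fun _ _ => I) (fun x t _ _ => fixN_H x t) cH).
- by move=> x; apply: set_val_inj; rewrite (restrict_homotopyE (fixN_H x 0%R)) H0.
- by move=> x; apply: set_val_inj; rewrite (restrict_homotopyE (fixN_H x 1%R)) H1.
- move=> c x t; apply: set_val_inj.
  rewrite (restrict_homotopyE (fixN_H _ t)) !fixActP_val.
  by rewrite (restrict_homotopyE (fixN_H _ t)) HP.
Qed.

Lemma fixOperad_free :
    (forall n s x, actS O n s x = x -> s = 1%g) ->
  forall n s (x : FixSp O N n), actS fixOperad n s x = x -> s = 1%g.
Proof. by move=> freeO n s x /(congr1 set_val); exact: freeO. Qed.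

Definition coset_preimage n (G : {set coset_of N * 'S_n}) : {set gT * 'S_n} :=
  [set p | (coset N p.1, p.2) \in G].

Lemma group_set_coset_preimage {n G} : group_set G -> group_set (coset_preimage n G).
Proof.
case/group_setP=> G1 GM; apply/group_setP; split; first by rewrite inE /= coset_id.
move=> [a s] [b t]; rewrite !inE /= => aG bG.
by rewrite coset_morphM ?norm_N //; exact: GM aG bG.
Qed.

Lemma coset_preimageJ n G (y : coset_of N * 'S_n) :
  coset_preimage n (G :^ y)%g = (coset_preimage n G :^ (repr y.1, y.2))%g.
Proof.
apply/finset.setP => -[a s]; rewrite mem_conjg !inE mem_conjg /=.
by rewrite morphJ ?morphV ?norm_N //= coset_reprK.
Qed.

Lemma coset_preimage_setX n (L : {set coset_of N}) :
  coset_preimage n (finset.setX L [set 1%g]) = finset.setX (coset N @*^-1 L)%g [set 1%g].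
Proof.
apply/finset.setP => -[a s]; rewrite !inE /=.
by have := norm_N a; rewrite inE => ->.
Qed.

Lemma fixset_coset_preimage n G (x : FixSp O N n) :
  Defs.fixset fixOperad n G x <-> Defs.fixset O n (coset_preimage n G) (set_val x).
Proof.
split=> [fx [g s] | fx [c s] cG]; last first.
  apply: set_val_inj; rewrite /= fixActP_val fixActS_val.
  by apply: (fx (repr c, s)); rewrite inE /= coset_reprK.
rewrite inE /= => gG; have /(congr1 set_val) := fx _ gG.
by rewrite /= fixActP_coset.
Qed.

Lemma fixset_coset_preimage_sub {n G} :
  group_set G -> (Defs.fixset O n (coset_preimage n G) `<=` fixN n)%classic.
Proof.
move=> /group_setP[G1 _] x fx [m s]; rewrite finset.in_setX inE => /andP[mN /eqP->].
by apply: fx; rewrite inE /= coset_id.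
Qed.

Definition quotient_family n (F : {set {set gT * 'S_n}}) :
    {set {set coset_of N * 'S_n}} :=
  [set G | group_set G && (coset_preimage n G \in F)].

Lemma is_family_quotient n F : is_family _ F -> is_family _ (quotient_family n F).
Proof.
case=> _ F_sub F_conj; split.
- by move=> G; rewrite inE => /andP[].
- move=> G G'; rewrite !inE => /andP[gG GF] gG' sG'G; rewrite gG' /=.
  apply: (F_sub _ _ GF); first exact: group_set_coset_preimage.
  by apply/fintype.subsetP => p; rewrite !inE; exact: (fintype.subsetP sG'G).
- move=> G y; rewrite !inE => /andP[gG GF].
  by rewrite (group_set_conjG (Group gG)) coset_preimageJ F_conj.
Qed.

Lemma fixOperad_universal n : universal_n _ O n -> universal_n _ fixOperad n.
Proof.
case=> F [famF contrF emptyF FL]; exists (quotient_family n F); split.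
- exact: is_family_quotient.
- move=> G; rewrite inE => /andP[gG GF].
  exact: (contractible_set_type (fixset_coset_preimage n G)
    (fixset_coset_preimage_sub gG) (contrF (Group (group_set_coset_preimage gG)) GF)).
- move=> G; rewrite inE (groupP G) /= => GF.
  have emptyG := emptyF (Group (group_set_coset_preimage (groupP G))) GF.
  by apply/seteqP; split=> [x /fixset_coset_preimage|//]; rewrite /= emptyG.
- move=> L; rewrite inE group_setX coset_preimage_setX.
  exact: (FL (coset N @*^-1 L)%G).
Qed.

Lemma fixOperad_admissible (H : {group gT}) n (f : {morphism (H / N)%g >-> 'S_n}) :
    (N \subset H)%g ->
  admissible fixOperad n (H / N)%g f <-> admissible O n H (fun h => f (coset N h)).
Proof.
move=> sNH; split=> [[x fx] | [y fy]].
  exists (set_val x) => _ /imsetP[h hH ->].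
  have /(congr1 set_val) := fx _ (imset_f _ (mem_quotient N hH)).
  by rewrite /= fixActP_coset.
have fixN_y : fixN n y.
  apply/fixNP => m mN.
  have := fy (m, f (coset N m)) (imset_f _ (fintype.subsetP sNH m mN)).
  by rewrite /= coset_id // morph1 actS1.
exists (exist (fun z => z \in fixN n) y (mem_set fixN_y)).
move=> _ /imsetP[_ /morphimP[h _ hH ->] ->].
apply: set_val_inj; rewrite /= fixActP_coset fixActS_val.
exact: (fy _ (imset_f _ hH)).
Qed.

End FixedPointOperad.

Theorem mainTheorem20 (gT : finGroupType) (N : {group gT}) (O : preOperad gT) :
  (N <| [set: gT])%g -> isNinf O ->
  exists (aP : forall n, coset_of N -> FixSp O N n -> FixSp O N n)
         (aS : forall n, 'S_n -> FixSp O N n -> FixSp O N n)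
         (u : FixSp O N 1)
         (cp : forall k (js : 'I_k -> nat),
                 FixSp O N k -> (forall i : 'I_k, FixSp O N (js i)) ->
                 FixSp O N (\sum_(i < k) js i)),
    let ON := @PreOperad (coset_of N) (FixSp O N) aP aS u cp in
    [/\ (* ON is the levelwise N-fixed points of O, with the induced
           G/N-action, Sigma_n-actions, identity and composition *)
        (forall n (g : gT) (x : FixSp O N n),
            set_val (aP n (coset N g) x) = actP O n g (set_val x)) /\
        (forall n (s : 'S_n) (x : FixSp O N n),
            set_val (aS n s x) = actS O n s (set_val x)) /\
        set_val u = opunit O /\
        (forall k (js : 'I_k -> nat) (c : FixSp O N k)
                (d : forall i, FixSp O N (js i)),
            set_val (cp k js c d) = opcomp O js (set_val c) (fun i => set_val (d i))),
        (* (i) O^N is an N_infty G/N-operad *)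
        isNinf ON &
        (* (ii) admissibility of finite H/N-sets, N <= H <= G *)
        forall (H : {group gT}) (n : nat) (f : {morphism (H / N)%g >-> 'S_n}),
          (N \subset H)%g ->
          (admissible ON n (H / N)%g f <->
           admissible O n H (fun h => f (coset N h)))].
Proof.
move=> nsNG [[actO unitO compO assocO [unitalO symO]] contrO freeO univO].
exists (@fixActP _ _ _ nsNG actO), (@fixActS _ _ _ actO),
  (@fixUnit _ _ _ actO unitO), (@fixComp _ _ _ actO compO).
split.
- by split; [exact: fixActP_coset | split].
- split; first split.
  + exact: fixOperad_actions.
  + exact: fixOperad_unit_fixed.
  + exact: fixOperad_comp.
  + exact: fixOperad_assoc.
  + by split; [exact: fixOperad_unital | exact: fixOperad_sym_equivariant].
  + exact: fixOperad_Pi_contractible.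
  + exact: fixOperad_free.
  + by move=> n; exact: fixOperad_universal.
- by move=> H n f; exact: fixOperad_admissible.
Qed.
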